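(* Consider the remote-estimation MDP described in the context, assume $\rho^2(\mathbf{A})(1-\theta_{\max})<1$, and let $V$ be the relative value function obtained as the limit of relative value iteration (defined in the context) started from a function $V^0$ that is non-decreasing in $\delta$ and in $\tau$ (e.g. $V^0\equiv0$). Then: (i) for every $\tau\in\mathbb{N}^+$, $\delta\mapsto V(\tau,\delta)$ is non-decreasing; (ii) for every $\delta\in\mathbb{N}^+$, $\tau\mapsto V(\tau,\delta)$ is non-decreasing.
   Context: Linear Gaussian process $\mathbf{x}_{k+1}=\mathbf{A}\mathbf{x}_k+\mathbf{w}_k$, $\mathbf{w}_k$ i.i.d. $\mathcal{N}(0,\mathbf{Q})$, $\mathbf{Q}\succeq 0$; measurements $\mathbf{y}_k=\mathbf{C}\mathbf{x}_k+\mathbf{v}_k$, $\mathbf{v}_k$ i.i.d. $\mathcal{N}(0,\mathbf{R})$, $\mathbf{R}\succ0$; $(\mathbf{A},\mathbf{C})$ observable, $(\mathbf{A},\sqrt{\mathbf{Q}})$ controllable; $\bar{\mathbf{P}}$ the steady-state a posteriori Kalman error covariance; $\rho(\cdot)$ spectral radius. $f(\delta)=\mathrm{tr}\big(\mathbf{A}^{\delta}\bar{\mathbf{P}}(\mathbf{A}^T)^{\delta}+\sum_{r=0}^{\delta-1}\mathbf{A}^r\mathbf{Q}(\mathbf{A}^T)^r\big)$, which is non-decreasing in $\delta$. $\theta:\mathbb{N}^+\to[\theta_{\min},\theta_{\max}]\subseteq[0,1]$ non-increasing; $\bar\theta=1-\theta$; integers $\tau_D>1$, $\delta_R>1$. MDP: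 states $s=(\tau,\delta)\in\mathcal{S}=\mathbb{N}^+\times\mathbb{N}^+$, actions $\mathcal{U}=\{0,1,2\}$. Transitions $P_{s,s'}(u)$ from $(\tau,\delta)$: $u=0$: to $(\tau+1,\delta+1)$ w.p. 1; $u=1$: to $(\tau+\tau_D,1)$ w.p. $\theta(\tau)$, to $(\tau+\tau_D,\delta+1)$ w.p. $\bar\theta(\tau)$; $u=2$: to $(1,\delta+\delta_R)$ w.p. 1. Cost $c(s,u)=f(\delta)$ for $u\in\{0,1\}$, $c(s,2)=\sum_{r=0}^{\delta_R-1}f(\delta+r)$. Relative value iteration: fix a reference state $s_{\mathrm{ref}}$; for $n\ge1$, $Q^n(s,u)=c(s,u)+\sum_{s'}P_{s,s'}(u)V^{n-1}(s')$, $\tilde V^n(s)=\min_{u\in\mathcal{U}}Q^n(s,u)$, $V^n(s)=\tilde V^n(s)-\tilde V^n(s_{\mathrm{ref}})$; $V=\lim_n V^n$, which solves the average-cost Bellman equation $\lambda^*+V(s)=\min_u[c(s,u)+\sum_{s'}P_{s,s'}(u)V(s')]$. *)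

From mathcomp Require Import all_boot all_order all_algebra.
From mathcomp Require Import all_classical all_reals topology normedtype sequences.
From mathcomp Require Import complex.

Set Implicit Arguments.
Unset Strict Implicit.
Unset Printing Implicit Defensive.

Import Order.TTheory GRing.Theory Num.Theory.
Local Open Scope ring_scope.
Local Open Scope classical_set_scope.

Definition psd (R : realType) (n : nat) (M : 'M[R]_n) : Prop :=
  M^T = M /\ forall x : 'cV[R]_n, 0 <= (x^T *m M *m x) 0 0.

Definition pd (R : realType) (n : nat) (M : 'M[R]_n) : Prop :=
  M^T = M /\ forall x : 'cV[R]_n, x != 0 -> 0 < (x^T *m M *m x) 0 0.

Definition observable (R : realType) (n m : nat)
  (A : 'M[R]_n) (C : 'M[R]_(m, n)) : Prop :=
  forall x : 'cV[R]_n, (forall k : nat, C *m (A ^+ k) *m x = 0) -> x = 0.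

Definition controllable (R : realType) (n p : nat)
  (A : 'M[R]_n) (B : 'M[R]_(n, p)) : Prop :=
  forall y : 'rV[R]_n, (forall k : nat, y *m (A ^+ k) *m B = 0) -> y = 0.

Definition spectral_radius (R : realType) (n : nat) (A : 'M[R]_n) : R :=
  sup [set Normc.normc z | z in
        [set z : R[i] | eigenvalue (map_mx (real_complex R) A) z]].

Definition kalman_apriori (R : realType) (n : nat) (A Q P : 'M[R]_n) : 'M[R]_n :=
  A *m P *m A^T + Q.

Definition steady_state_posterior (R : realType) (n m : nat)
  (A : 'M[R]_n) (C : 'M[R]_(m, n)) (Q : 'M[R]_n) (Rv : 'M[R]_m)
  (P : 'M[R]_n) : Prop :=
  psd P /\
  let Pm := kalman_apriori A Q P in
  P = Pm - Pm *m C^T *m invmx (C *m Pm *m C^T + Rv) *m C *m Pm.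

Definition fcost (R : realType) (n : nat) (A Q P : 'M[R]_n) (d : nat) : R :=
  \tr (A ^+ d *m P *m (A^T) ^+ d + \sum_(r < d) A ^+ r *m Q *m (A^T) ^+ r).

(* States (tau, delta) with tau, delta >= 1 are encoded as pairs of nats;
   value functions are curried  V tau delta.  Actions are u = 0, 1, 2. *)

Definition Qval (R : realType) (f : nat -> R) (theta : nat -> R)
  (tauD deltaR : nat) (V : nat -> nat -> R) (tau delta u : nat) : R :=
  match u with
  | 0 => f delta + V tau.+1 delta.+1
  | 1 => f delta + (theta tau * V (tau + tauD)%N 1%N
                    + (1 - theta tau) * V (tau + tauD)%N delta.+1)
  | _ => \sum_(r < deltaR) f (delta + r)%N + V 1%N (delta + deltaR)%N
  end.

Definition Vtilde (R : realType) (f : nat -> R) (theta : nat -> R)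
  (tauD deltaR : nat) (V : nat -> nat -> R) (tau delta : nat) : R :=
  Num.min (Qval f theta tauD deltaR V tau delta 0)
    (Num.min (Qval f theta tauD deltaR V tau delta 1)
             (Qval f theta tauD deltaR V tau delta 2)).

Fixpoint rvi (R : realType) (f : nat -> R) (theta : nat -> R)
  (tauD deltaR : nat) (tauref deltaref : nat) (V0 : nat -> nat -> R)
  (k : nat) : nat -> nat -> R :=
  match k with
  | 0 => V0
  | k'.+1 =>
      let Vp := rvi f theta tauD deltaR tauref deltaref V0 k' in
      fun tau delta =>
        Vtilde f theta tauD deltaR Vp tau delta
        - Vtilde f theta tauD deltaR Vp tauref deltaref
  end.

(** Relative value iteration preserves the class of value functions that are
    non-decreasing in both [tau] and [delta], and pointwise limits preserve it
    too.  Preservation needs the stage cost [f] to be non-decreasing, which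
    comes from the Kalman filter: [f (d + 1) - f d = tr (A^d (P^- - P) (A^T)^d)]
    and the steady-state correction [P^- - P] is positive semidefinite.  The
    only delicate case is the sending action in the [tau]-direction: the
    success probability [theta tau] decreases with [tau], but that moves weight
    from the outcome [V (.) 1] to the larger outcome [V (.) (delta + 1)], which
    can only increase the expected next value.  Subtracting the reference value
    shifts by a constant and does not affect monotonicity. *)

From mathcomp Require Import all_boot all_order all_algebra.
From mathcomp Require Import all_classical all_reals topology normedtype sequences.
From mathcomp Require Import complex lra.
Import Order.TTheory GRing.Theory Num.Theory.
Local Open Scope ring_scope.
Local Open Scope classical_set_scope.
Import numFieldNormedType.Exports.

Set Implicit Arguments.
Unset Strict Implicit.

Section PositiveSemidefinite.
Variable R : realType.
Implicit Types n p : nat.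

Lemma psdD n (M N : 'M[R]_n) : psd M -> psd N -> psd (M + N).
Proof.
move=> [tM pM] [tN pN]; split; first by rewrite linearD /= tM tN.
by move=> x; rewrite mulmxDr mulmxDl mxE addr_ge0.
Qed.

Lemma pdDl n (M N : 'M[R]_n) : psd M -> pd N -> pd (M + N).
Proof.
move=> [tM pM] [tN pN]; split; first by rewrite linearD /= tM tN.
by move=> x x0; rewrite mulmxDr mulmxDl mxE ltr_wpDl ?pN.
Qed.

Lemma psd_congr p n (B : 'M[R]_(p, n)) (M : 'M[R]_n) :
  psd M -> psd (B *m M *m B^T).
Proof.
move=> [tM pM]; split; first by rewrite !trmx_mul trmxK tM mulmxA.
by move=> x; have := pM (B^T *m x); rewrite trmx_mul trmxK !mulmxA.
Qed.

Lemma pd_psd n (M : 'M[R]_n) : pd M -> psd M.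
Proof.
move=> [tM pM]; split=> // x; have [->|/pM/ltW//] := eqVneq x 0.
by rewrite mulmx0 mxE.
Qed.

Lemma pd_unitmx n (M : 'M[R]_n) : pd M -> M \in unitmx.
Proof.
move=> [tM pM]; rewrite unitmxE unitfE; apply/negP => /det0P [v v0 vM].
have vT0 : v^T != 0.
  by apply: contra v0 => /eqP/(congr1 trmx); rewrite trmxK linear0 => ->.
by have := pM _ vT0; rewrite trmxK vM mul0mx mxE ltxx.
Qed.

Lemma psd_invmx n (M : 'M[R]_n) : pd M -> psd (invmx M).
Proof.
move=> pdM; have [tM _] := pdM.
have -> : invmx M = invmx M *m M *m (invmx M)^T.
  by rewrite mulVmx ?pd_unitmx // mul1mx trmx_inv tM.
exact/psd_congr/pd_psd.
Qed.

Lemma psd_mxtrace_ge0 n (M : 'M[R]_n) : psd M -> 0 <= \tr M.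
Proof.
move=> [_ pM]; apply: sumr_ge0 => i _.
by have := pM (delta_mx i 0); rewrite trmx_delta -rowE -colE !mxE.
Qed.

Lemma trmxX n (A : 'M[R]_n) d : (A ^+ d)^T = (A^T) ^+ d.
Proof.
elim: d => [|d IH]; first by rewrite !expr0 trmx1.
by rewrite exprS exprSr -mulmxE trmx_mul IH mulmxE.
Qed.

End PositiveSemidefinite.

Section EstimationCost.
Variables (R : realType) (n m : nat).
Variables (A Q P : 'M[R]_n).

Lemma posterior_le_apriori (C : 'M[R]_(m, n)) (Rv : 'M[R]_m) :
  psd Q -> pd Rv -> steady_state_posterior A C Q Rv P ->
  psd (kalman_apriori A Q P - P).
Proof.
move=> psdQ pdRv [psdP /= Peq]; set Pm := kalman_apriori A Q P in Peq *.
rewrite [X in _ - X]Peq.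
have psdPm : psd Pm by apply: psdD => //; apply: psd_congr.
have pdS : pd (C *m Pm *m C^T + Rv) by apply: pdDl => //; apply: psd_congr.
rewrite opprB addrC subrK.
have -> : Pm *m C^T *m invmx (C *m Pm *m C^T + Rv) *m C *m Pm
        = (Pm *m C^T) *m invmx (C *m Pm *m C^T + Rv) *m (Pm *m C^T)^T.
  by rewrite trmx_mul trmxK psdPm.1 !mulmxA.
exact/psd_congr/psd_invmx.
Qed.

Lemma fcostS d :
  fcost A Q P d.+1 = \tr (A ^+ d *m kalman_apriori A Q P *m (A^T) ^+ d
                          + \sum_(r < d) A ^+ r *m Q *m (A^T) ^+ r).
Proof.
rewrite /fcost big_ord_recr /= [X in _ + X]addrC addrA; congr (\tr (_ + _)).
rewrite /kalman_apriori exprSr exprS -!mulmxE.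
by rewrite mulmxDr mulmxDl !mulmxA.
Qed.

Lemma fcost_leS d :
  psd (kalman_apriori A Q P - P) -> fcost A Q P d <= fcost A Q P d.+1.
Proof.
move=> psdK; rewrite fcostS /fcost -subr_ge0 -linearB /= opprD addrACA subrr addr0.
rewrite -mulmxBl -mulmxBr.
by apply/psd_mxtrace_ge0; rewrite -trmxX; apply: psd_congr.
Qed.

End EstimationCost.

Lemma ler_mixture (R : realDomainType) (s t a a' b b' : R) :
  0 <= t -> t <= s -> s <= 1 -> a <= a' -> b <= b' -> a <= b ->
  s * a + (1 - s) * b <= t * a' + (1 - t) * b'.
Proof.
move=> t0 ts s1 aa' bb' ab.
have p1 : 0 <= t * (a' - a) by rewrite mulr_ge0 // subr_ge0.
have p2 : 0 <= (1 - t) * (b' - b) by rewrite mulr_ge0 ?subr_ge0 ?(le_trans ts).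
have p3 : 0 <= (s - t) * (b - a) by rewrite mulr_ge0 // subr_ge0.
lra.
Qed.

Section ValueIteration.
Variable R : realType.
Variables (f theta : nat -> R) (tauD deltaR : nat).
Hypothesis f_nondecreasing : {homo f : d1 d2 / (d1 <= d2)%N >-> d1 <= d2}.
Hypothesis theta_ge0 : forall t, (0 < t)%N -> 0 <= theta t.
Hypothesis theta_le1 : forall t, (0 < t)%N -> theta t <= 1.
Hypothesis theta_nonincreasing :
  forall t1 t2, (0 < t1)%N -> (t1 <= t2)%N -> theta t2 <= theta t1.

Definition monotone_value (V : nat -> nat -> R) : Prop :=
  (forall tau d1 d2, (0 < tau)%N -> (0 < d1)%N -> (d1 <= d2)%N ->
     V tau d1 <= V tau d2) /\
  (forall d t1 t2, (0 < d)%N -> (0 < t1)%N -> (t1 <= t2)%N ->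
     V t1 d <= V t2 d).

Lemma Qval_monotone V u :
  monotone_value V -> monotone_value (fun t d => Qval f theta tauD deltaR V t d u).
Proof.
move=> [Vd Vt]; case: u => [|[|u]] /=; split.
- by move=> t d1 d2 t0 d0 dd; rewrite lerD ?f_nondecreasing ?Vd.
- by move=> d t1 t2 d0 t0 tt; rewrite lerD ?Vt // ltnS.
- move=> t d1 d2 t0 d0 dd; have tD0 : (0 < t + tauD)%N by rewrite addn_gt0 t0.
  by rewrite lerD ?f_nondecreasing // lerD // ler_wpM2l ?Vd ?subr_ge0 ?theta_le1.
- move=> d t1 t2 d0 t0 tt; rewrite lerD2l.
  have tD0 : (0 < t1 + tauD)%N by rewrite addn_gt0 t0.
  have ttD : (t1 + tauD <= t2 + tauD)%N by rewrite leq_add2r.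
  have t20 : (0 < t2)%N := leq_trans t0 tt.
  apply: ler_mixture; rewrite ?theta_ge0 ?theta_le1 ?theta_nonincreasing //.
  + exact: Vt.
  + exact: Vt.
  + exact: Vd.
- move=> t d1 d2 t0 d0 dd; rewrite lerD ?Vd ?addn_gt0 ?d0 ?leq_add2r //.
  by apply: ler_sum => i _; rewrite f_nondecreasing // leq_add2r.
- by move=> *; rewrite lexx.
Qed.

Lemma Vtilde_monotone V :
  monotone_value V -> monotone_value (Vtilde f theta tauD deltaR V).
Proof.
move=> monoV; have [Q0d Q0t] := Qval_monotone 0 monoV.
have [Q1d Q1t] := Qval_monotone 1 monoV; have [Q2d _] := Qval_monotone 2 monoV.
split=> *; rewrite /Vtilde !le_min2 //;
  [exact: Q0d | exact: Q1d | exact: Q2d | exact: Q0t | exact: Q1t].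
Qed.

Lemma rvi_monotone tauref deltaref V0 k :
  monotone_value V0 ->
  monotone_value (rvi f theta tauD deltaR tauref deltaref V0 k).
Proof.
move=> monoV0; elim: k => [//|k IH] /=.
have [Td Tt] := Vtilde_monotone IH.
by split=> *; rewrite lerD2r ?Td ?Tt.
Qed.

End ValueIteration.

Lemma monotone_value_cvg (R : realType) (W : nat -> nat -> nat -> R)
    (V : nat -> nat -> R) :
  (forall k, monotone_value (W k)) ->
  (forall tau d, (0 < tau)%N -> (0 < d)%N -> (fun k => W k tau d) @ \oo --> V tau d) ->
  monotone_value V.
Proof.
move=> monoW cvgW; split.
- move=> tau d1 d2 t0 d0 dd.
  apply: (ler_cvg_to (cvgW _ _ t0 d0) (cvgW _ _ t0 (leq_trans d0 dd))).
  by apply: nearW => k; apply: (monoW k).1.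
- move=> d t1 t2 d0 t0 tt.
  apply: (ler_cvg_to (cvgW _ _ t0 d0) (cvgW _ _ (leq_trans t0 tt) d0)).
  by apply: nearW => k; apply: (monoW k).2.
Qed.

Theorem proposition1
  (R : realType) (n m : nat)
  (A : 'M[R]_n) (C : 'M[R]_(m, n)) (Q sqrtQ : 'M[R]_n) (Rv : 'M[R]_m)
  (Pbar : 'M[R]_n)
  (theta : nat -> R) (theta_min theta_max : R) (tauD deltaR : nat)
  (tauref deltaref : nat) (V0 V : nat -> nat -> R) :
  psd Q -> pd Rv ->
  psd sqrtQ -> sqrtQ *m sqrtQ = Q ->
  observable A C -> controllable A sqrtQ ->
  steady_state_posterior A C Q Rv Pbar ->
  0 <= theta_min -> theta_min <= theta_max -> theta_max <= 1 ->
  (forall tau, (0 < tau)%N -> theta_min <= theta tau <= theta_max) ->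
  (forall tau1 tau2, (0 < tau1)%N -> (tau1 <= tau2)%N -> theta tau2 <= theta tau1) ->
  (1 < tauD)%N -> (1 < deltaR)%N ->
  spectral_radius A ^+ 2 * (1 - theta_max) < 1 ->
  (0 < tauref)%N -> (0 < deltaref)%N ->
  (forall tau d1 d2, (0 < tau)%N -> (0 < d1)%N -> (d1 <= d2)%N ->
     V0 tau d1 <= V0 tau d2) ->
  (forall d t1 t2, (0 < d)%N -> (0 < t1)%N -> (t1 <= t2)%N ->
     V0 t1 d <= V0 t2 d) ->
  (forall tau d, (0 < tau)%N -> (0 < d)%N ->
     (fun k => rvi (fcost A Q Pbar) theta tauD deltaR tauref deltaref V0 k tau d)
       @ \oo --> V tau d) ->
  (forall tau d1 d2, (0 < tau)%N -> (0 < d1)%N -> (d1 <= d2)%N ->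
     V tau d1 <= V tau d2) /\
  (forall d t1 t2, (0 < d)%N -> (0 < t1)%N -> (t1 <= t2)%N ->
     V t1 d <= V t2 d).
Proof.
move=> psdQ pdRv _ _ _ _ ssP tmin0 _ tmax1 theta_bnd theta_noninc _ _ _ _ _
  V0d V0t cvgV.
have f_nondecreasing : {homo fcost A Q Pbar : d1 d2 / (d1 <= d2)%N >-> d1 <= d2}.
  apply: homo_leq => [x|y x z|d]; [exact: lexx | exact: le_trans |].
  exact/fcost_leS/(posterior_le_apriori psdQ pdRv ssP).
have theta_ge0 t : (0 < t)%N -> 0 <= theta t.
  by move=> /theta_bnd /andP [+ _]; apply: le_trans.
have theta_le1 t : (0 < t)%N -> theta t <= 1.
  by move=> /theta_bnd /andP [_ +]; move/le_trans; apply.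
apply: (@monotone_value_cvg R (rvi (fcost A Q Pbar) theta tauD deltaR tauref deltaref V0)
  V _ cvgV) => k.
by apply: rvi_monotone; last exact: conj V0d V0t.
Qed.
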